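(* Let $\mathit{VI}$ be a finite set of variables with $\#\mathit{VI}=n$. For each $sh_1,sh_2\in\mathit{SH}$, each $\sigma\in\mathit{Subst}$ and each $k\in\mathbb{N}$ with $1\le k\le n$: if $\rho_{\mathit{TSD}_k}(sh_1)=\rho_{\mathit{TSD}_k}(sh_2)$ then $\rho_{\mathit{TSD}_k}(\mathrm{amgu}(sh_1,\sigma))=\rho_{\mathit{TSD}_k}(\mathrm{amgu}(sh_2,\sigma))$.
   Context: $\mathit{SG}=\wp(\mathit{VI})\setminus\{\emptyset\}$, $\mathit{SH}=\wp(\mathit{SG})$. $\rho_{\mathit{TSD}_k}(sh)=\{\,S\in\mathit{SG}\mid \forall T\subseteq S:\ \#T<k\implies S=\bigcup\{U\in sh\mid T\subseteq U\subseteq S\}\,\}$. $\mathit{Subst}$: idempotent substitutions (finite sets of bindings $x\mapsto t$ with $t\ne x$ a first-order term), with variables in $\mathit{VI}$; $\mathrm{vars}(t)$ is the set of variables of $t$. $\mathrm{bin}(sh_1,sh_2)=\{S_1\cup S_2\mid S_i\in sh_i\}$; $sh^\star=\{S\in\mathit{SG}\mid\exists sh'\subseteq sh: S=\bigcup sh'\}$; $\mathrm{rel}(V,sh)=\{S\in sh\mid S\cap V\ne\emptyset\}$; with $v_x=\{x\}$, $v_t=\mathrm{vars}(t)$, $v_{xt}=v_x\cup v_t$: $\mathrm{amgu}(sh,x\mapsto t)=(sh\setminus\mathrm{rel}(v_{xt},sh))\cup\mathrm{bin}(\mathrm{rel}(v_x,sh)^\star,\mathrm{rel}(v_t,sh)^\star)$;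 $\mathrm{amgu}(sh,\emptyset)=sh$, $\mathrm{amgu}(sh,\{x\mapsto t\}\cup\sigma)=\mathrm{amgu}(\mathrm{amgu}(sh,x\mapsto t),\sigma\setminus\{x\mapsto t\})$. *)

From Stdlib Require List.
From mathcomp Require Import all_boot.
Set Implicit Arguments. Unset Strict Implicit. Unset Printing Implicit Defensive.

Section Defs.
Variable VI : finType.

Inductive term : Type := Var of VI | Fn of nat & seq term.

Fixpoint vars (t : term) : {set VI} :=
  match t with
  | Var x => [set x]
  | Fn _ ts => (fix vs (l : seq term) : {set VI} :=
                  match l with [::] => set0 | u :: l' => vars u :|: vs l' end) ts
  end.

(* A substitution is given as a finite list of bindings x |-> t (an
   enumeration of the finite set of bindings). *)
Definition binding := (VI * term)%type.

Definition dom (s : seq binding) : {set VI} := [set x in map fst s].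

Definition idem_subst (s : seq binding) : Prop :=
  uniq (map fst s) /\
  (forall x t, List.In (x, t) s -> t <> Var x) /\
  (forall x t, List.In (x, t) s -> [disjoint vars t & dom s]).

Definition is_SH (sh : {set {set VI}}) : Prop := set0 \notin sh.

Definition rhoTSD (k : nat) (sh : {set {set VI}}) : {set {set VI}} :=
  [set S : {set VI} | (S != set0) &&
     [forall T : {set VI}, ((T \subset S) && (#|T| < k)) ==>
        (S == \bigcup_(U in sh | (T \subset U) && (U \subset S)) U)]].

Definition bin (sh1 sh2 : {set {set VI}}) : {set {set VI}} :=
  [set S1 :|: S2 | S1 in sh1, S2 in sh2].

Definition star (sh : {set {set VI}}) : {set {set VI}} :=
  [set S : {set VI} | (S != set0) &&
     [exists sh' : {set {set VI}}, (sh' \subset sh) && (S == \bigcup_(U in sh') U)]].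

Definition rel (V : {set VI}) (sh : {set {set VI}}) : {set {set VI}} :=
  [set S in sh | S :&: V != set0].

Definition amgu1 (sh : {set {set VI}}) (x : VI) (t : term) : {set {set VI}} :=
  (sh :\: rel ([set x] :|: vars t) sh) :|:
  bin (star (rel [set x] sh)) (star (rel (vars t) sh)).

(* amgu(sh, {x|->t} ∪ σ) = amgu(amgu(sh, x|->t), σ \ {x|->t}), processing
   the bindings in the order of the enumeration. *)
Definition amgu (sh : {set {set VI}}) (s : seq binding) : {set {set VI}} :=
  foldl (fun sh' b => amgu1 sh' b.1 b.2) sh s.

End Defs.

From Pilot Require Import Defs.
From mathcomp Require Import all_boot.

Set Implicit Arguments. Unset Strict Implicit. Unset Printing Implicit Defensive.

(* For k >= 1 compare sharing sets by the preorder sh <= sh': every nonempty W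
   with #|W| <= k that lies in some U in sh lies in some U' in sh' with
   U' \subset U.  A set S is in rhoTSD k sh exactly when S is nonempty and
   every such W \subset S lies in some U in sh below S; hence sh and rhoTSD k sh are equivalent for
   the preorder and rhoTSD k is monotone, so it suffices to show that amgu with
   one binding x |-> t is monotone.  Groups untouched by the binding are
   witnessed directly.  For a new group S1 :|: S2 the witness in amgu1 sh' is
   the union M of all groups of sh' related to x or to t that lie below
   S1 :|: S2.  If W lies in one related group c of sh, a witness c' of W below c
   is either untouched or contained in M.  Otherwise every piece W :&: c with c
   a related group has fewer than k elements; adding a variable of c shared
   with the binding gives a set witnessed by a related group of sh' below c,
   hence inside M, so W \subset M. *)

Section TSD.
Variable VI : finType.
Implicit Types (sh : {set {set VI}}) (S T U V W c : {set VI}).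
Variable k : nat.

Definition tsd_le sh sh' := forall U W, U \in sh -> W \subset U ->
  W != set0 -> #|W| <= k -> exists2 U', U' \in sh' & (W \subset U') && (U' \subset U).

Lemma tsd_le_trans sh1 sh2 sh3 :
  tsd_le sh1 sh2 -> tsd_le sh2 sh3 -> tsd_le sh1 sh3.
Proof.
move=> le12 le23 U W Ush sWU nzW szW.
have [U' U'sh /andP[sWU' sU'U]] := le12 U W Ush sWU nzW szW.
have [U'' U''sh /andP[sWU'' sU''U']] := le23 U' W U'sh sWU' nzW szW.
by exists U''; rewrite // sWU'' (subset_trans sU''U' sU'U).
Qed.

Lemma rhoTSDP sh S : reflect (S != set0 /\ forall W, W \subset S -> W != set0 ->
    #|W| <= k -> exists2 U, U \in sh & (W \subset U) && (U \subset S))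
  (S \in rhoTSD k sh).
Proof.
rewrite inE; apply: (iffP andP) => -[nzS HS]; split=> //.
- move=> W sWS /set0Pn[w wW] szW.
  have sW'S : W :\ w \subset S := subset_trans (subsetDl _ _) sWS.
  have szW' : #|W :\ w| < k by rewrite (cardsD1 w W) wW in szW.
  have /implyP/(_ (introT andP (conj sW'S szW')))/eqP defS := forallP HS (W :\ w).
  have := subsetP sWS w wW; rewrite {1}defS => /bigcupP[U /andP[Ush /andP[sW'U sUS]] wU].
  by exists U; rewrite // sUS andbT -(setD1K wW) subUset sub1set wU.
- apply/forallP => T; apply/implyP => /andP[sTS szT].
  rewrite eqEsubset; apply/andP; split; last first.
    by apply/bigcupsP => U /andP[_ /andP[_ ->]].
  apply/subsetP => s sS.
  have sTsS : s |: T \subset S by rewrite subUset sub1set sS.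
  have nzTs : s |: T != set0 by apply/set0Pn; exists s; rewrite setU11.
  have szTs : #|s |: T| <= k by rewrite cardsU1 (leq_trans _ szT) // -add1n leq_add2r leq_b1.
  have [U Ush /andP[sTsU sUS]] := HS _ sTsS nzTs szTs.
  apply/bigcupP; exists U; last by apply: (subsetP sTsU); rewrite setU11.
  by rewrite Ush sUS (subset_trans (subsetUr _ _) sTsU).
Qed.

Lemma rhoTSDS sh sh' : tsd_le sh sh' -> rhoTSD k sh \subset rhoTSD k sh'.
Proof.
move=> le; apply/subsetP => S /rhoTSDP[nzS HS]; apply/rhoTSDP; split=> // W sWS nzW szW.
have [U Ush /andP[sWU sUS]] := HS W sWS nzW szW.
have [U' U'sh /andP[sWU' sU'U]] := le U W Ush sWU nzW szW.
by exists U'; rewrite // sWU' (subset_trans sU'U sUS).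
Qed.

Lemma tsd_le_rhoTSD sh : tsd_le sh (rhoTSD k sh).
Proof.
move=> U W Ush sWU nzW szW; exists U; last by rewrite sWU subxx.
apply/rhoTSDP; split=> [|W' sW'U _ _]; last by exists U; rewrite // sW'U subxx.
by case/set0Pn: nzW => w /(subsetP sWU) wU; apply/set0Pn; exists w.
Qed.

Lemma rhoTSD_tsd_le sh : tsd_le (rhoTSD k sh) sh.
Proof. by move=> U W /rhoTSDP[_]; apply. Qed.

Lemma tsd_le_eq_rhoTSD sh1 sh2 : rhoTSD k sh1 = rhoTSD k sh2 -> tsd_le sh1 sh2.
Proof.
move=> E; have := @rhoTSD_tsd_le sh2; rewrite -E.
exact: tsd_le_trans (@tsd_le_rhoTSD sh1).
Qed.

Definition rel_below V sh U := \bigcup_(c in [set c in Defs.rel V sh | c \subset U]) c.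

Lemma rel_below_sub V sh U : rel_below V sh U \subset U.
Proof. by apply/bigcupsP => c; rewrite inE => /andP[_ ->]. Qed.

Lemma sub_rel_below V sh U c :
  c \in Defs.rel V sh -> c \subset U -> c \subset rel_below V sh U.
Proof. by move=> crel cU; apply: bigcup_sup; rewrite inE crel. Qed.

Lemma rel_below_star V sh U c :
  c \in Defs.rel V sh -> c \subset U -> rel_below V sh U \in star (Defs.rel V sh).
Proof.
move=> crel cU; rewrite inE; apply/andP; split.
  have /subsetP sc := sub_rel_below crel cU.
  move: crel; rewrite inE => /andP[_ /set0Pn[v /setIP[vc _]]].
  by apply/set0Pn; exists v; exact: sc.
apply/existsP; exists [set c in Defs.rel V sh | c \subset U]; rewrite eqxx andbT.
by apply/subsetP => c'; rewrite inE => /andP[].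
Qed.

Lemma star_relP V sh S : S \in star (Defs.rel V sh) ->
  S != set0 /\ forall w, w \in S -> exists2 c, c \in Defs.rel V sh & (w \in c) && (c \subset S).
Proof.
rewrite inE => /andP[nzS /existsP[A /andP[sA /eqP defS]]]; split=> // w.
rewrite defS => /bigcupP[c cA wc]; exists c; first exact: subsetP sA c cA.
by rewrite wc (bigcup_sup c cA).
Qed.

Lemma relS V1 V2 sh c : V1 \subset V2 -> c \in Defs.rel V1 sh -> c \in Defs.rel V2 sh.
Proof.
rewrite !inE => sV12 /andP[-> /set0Pn[v /setIP[vc vV]]].
by apply/set0Pn; exists v; rewrite !inE vc (subsetP sV12).
Qed.

Lemma amgu1_unaffected sh x t c :
  c \in sh -> c :&: ([set x] :|: vars t) == set0 -> c \in amgu1 sh x t.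
Proof. by move=> csh cV; rewrite !inE csh cV. Qed.

Section Monotone.
Variables sh sh' : {set {set VI}}.
Hypothesis le : tsd_le sh sh'.
Hypothesis k_gt0 : 0 < k.

Lemma tsd_le_rel V c T : c \in Defs.rel V sh -> T \subset c -> #|T| < k ->
  exists2 c', c' \in Defs.rel V sh' & (T \subset c') && (c' \subset c).
Proof.
rewrite inE => /andP[csh /set0Pn[v /setIP[vc vV]]] sTc szT.
have svTc : v |: T \subset c by rewrite subUset sub1set vc.
have nzvT : v |: T != set0 by apply/set0Pn; exists v; rewrite setU11.
have szvT : #|v |: T| <= k by rewrite cardsU1 (leq_trans _ szT) // -add1n leq_add2r leq_b1.
have [c' c'sh /andP[svTc' sc'c]] := le csh svTc nzvT szvT.
have vc' : v \in c' by apply: (subsetP svTc'); rewrite setU11.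
exists c'; last by rewrite sc'c (subset_trans (subsetUr _ _) svTc').
by rewrite inE c'sh; apply/set0Pn; exists v; rewrite inE vc'.
Qed.

Lemma rel_below_star_tsd_le V S U : S \in star (Defs.rel V sh) -> S \subset U ->
  rel_below V sh' U \in star (Defs.rel V sh').
Proof.
move=> /star_relP[/set0Pn[w wS] cover] sSU.
have [c crel /andP[_ scS]] := cover w wS.
have szT : #|@set0 VI| < k by rewrite cards0.
have [c' c'rel /andP[_ sc'c]] := tsd_le_rel crel (sub0set c) szT.
exact: rel_below_star c'rel (subset_trans sc'c (subset_trans scS sSU)).
Qed.

Lemma star_rel_sub_rel_below V S U W : S \in star (Defs.rel V sh) -> S \subset U ->
  #|W| <= k -> (forall c, c \in Defs.rel V sh -> c \subset U -> ~~ (W \subset c)) ->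
  W :&: S \subset rel_below V sh' U.
Proof.
move=> /star_relP[_ cover] sSU szW noc; apply/subsetP => w /setIP[wW wS].
have [c crel /andP[wc scS]] := cover w wS.
have scU := subset_trans scS sSU.
have szWc : #|W :&: c| < k.
  apply: leq_trans szW; apply: proper_card.
  by rewrite properE subsetIl subsetI subxx noc.
have [c' c'rel /andP[sWcc' sc'c]] := tsd_le_rel crel (subsetIr W c) szWc.
apply: (subsetP (sub_rel_below c'rel (subset_trans sc'c scU))).
by apply: (subsetP sWcc'); rewrite inE wW.
Qed.

Lemma tsd_le_amgu1_bin x t S1 S2 W :
  S1 \in star (Defs.rel [set x] sh) -> S2 \in star (Defs.rel (vars t) sh) ->
  W \subset S1 :|: S2 -> W != set0 -> #|W| <= k ->
  exists2 U', U' \in amgu1 sh' x t & (W \subset U') && (U' \subset S1 :|: S2).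
Proof.
move=> S1star S2star sWU nzW szW.
set U := S1 :|: S2; set V := [set x] :|: vars t.
set M := rel_below [set x] sh' U :|: rel_below (vars t) sh' U.
have sMU : M \subset U by rewrite subUset !rel_below_sub.
have Min : M \in amgu1 sh' x t.
  apply/setUP; right; apply/imset2P.
  exists (rel_below [set x] sh' U) (rel_below (vars t) sh' U) => //.
    exact: rel_below_star_tsd_le S1star (subsetUl _ _).
  exact: rel_below_star_tsd_le S2star (subsetUr _ _).
have [/existsP[c /and3P[crel scU sWc]]|noc] :=
    boolP [exists c, [&& c \in Defs.rel V sh, c \subset U & W \subset c]].
  move: (crel); rewrite inE => /andP[csh _].
  have [c' c'sh /andP[sWc' sc'c]] := le csh sWc nzW szW.
  have sc'U := subset_trans sc'c scU.
  have [c'V|c'V] := boolP (c' :&: V == set0).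
    by exists c'; rewrite ?amgu1_unaffected // sWc'.
  exists M; rewrite // sMU andbT (subset_trans sWc') //.
  move: c'V; rewrite setIUr setU_eq0 negb_and => /orP[] c'V.
    by apply: subset_trans (subsetUl _ _); apply: sub_rel_below; rewrite // inE c'sh.
  by apply: subset_trans (subsetUr _ _); apply: sub_rel_below; rewrite // inE c'sh.
have noc' V' c : V' \subset V -> c \in Defs.rel V' sh -> c \subset U -> ~~ (W \subset c).
  move=> sV'V crel cU; apply: contra noc => sWc; apply/existsP; exists c.
  by rewrite (relS sV'V crel) cU sWc.
exists M; rewrite // sMU andbT -(setIidPl sWU) setIUr setUSS //.
  by apply: star_rel_sub_rel_below S1star (subsetUl _ _) szW _ => c; apply: noc'; rewrite subsetUl.
by apply: star_rel_sub_rel_below S2star (subsetUr _ _) szW _ => c; apply: noc'; rewrite subsetUr.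
Qed.

Lemma tsd_le_amgu1 x t : tsd_le (amgu1 sh x t) (amgu1 sh' x t).
Proof.
move=> U W; rewrite in_setU => /orP[|/imset2P[S1 S2 S1star S2star ->]].
  rewrite in_setD => /andP[Urel Ush] sWU nzW szW.
  have UV : U :&: ([set x] :|: vars t) == set0 by move: Urel; rewrite inE Ush negbK.
  have [U' U'sh /andP[sWU' sU'U]] := le Ush sWU nzW szW.
  exists U'; rewrite ?sWU' // amgu1_unaffected // -subset0.
  by rewrite -subset0 in UV; exact: subset_trans (setSI _ sU'U) UV.
exact: tsd_le_amgu1_bin.
Qed.

End Monotone.

Lemma tsd_le_amgu sh sh' s : 0 < k -> tsd_le sh sh' -> tsd_le (amgu sh s) (amgu sh' s).
Proof.
move=> k_gt0; elim: s sh sh' => //= b s IH sh sh' le.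
exact/IH/tsd_le_amgu1.
Qed.

End TSD.

Theorem lemma3p20 (VI : finType) (n : nat) (HVI : #|VI| = n)
  (sh1 sh2 : {set {set VI}}) (H1 : is_SH sh1) (H2 : is_SH sh2)
  (sigma : seq (binding VI)) (Hsigma : idem_subst sigma)
  (k : nat) (Hk : 1 <= k <= n) :
  rhoTSD k sh1 = rhoTSD k sh2 ->
  rhoTSD k (amgu sh1 sigma) = rhoTSD k (amgu sh2 sigma).
Proof.
move=> E; have k_gt0 : 0 < k by case/andP: Hk.
have le12 := tsd_le_eq_rhoTSD E; have le21 := tsd_le_eq_rhoTSD (esym E).
apply/eqP; rewrite eqEsubset; apply/andP; split; apply: rhoTSDS; exact: tsd_le_amgu.
Qed.
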